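(* Let $\mathcal E$ be a nonlinear Dirichlet form on $L^2(\mu)$ (so that $\mathcal E_e$ exists). (a) For every $h\in\ker\|\cdot\|_{L_e}$ and every $\alpha\ge0$ the set $\{h>\alpha\}$ is $\mathcal E$-invariant. (b) If $\mathcal E$ is irreducible, then $\ker\|\cdot\|_{L_e}\subseteq\mathbb R\cdot1$.
   Context: $(X,\mathfrak A,\mu)$ is $\sigma$-finite; $L^0(\mu)$ carries local convergence in measure. A nonlinear Dirichlet form is a lower semicontinuous convex $\mathcal E\colon L^2(\mu)\to[0,\infty]$ with $\mathcal E(-f)=\mathcal E(f)$, $\mathcal E(0)=0$, such that $\mathcal E(f+Cg)+\mathcal E(f-Cg)\le\mathcal E(f+g)+\mathcal E(f-g)$ for all $f,g$ and every 1-Lipschitz $C\colon\mathbb R\to\mathbb R$ with $C(0)=0$. $\mathcal E_e$ is the lower semicontinuous relaxation on $L^0(\mu)$ (w.r.t. local convergence in measure) of $\mathcal E$ extended by $+\infty$ outside $L^2(\mu)$; $M(\mathcal E_e)=\{f:\lim_{\lambda\to0+}\mathcal E_e(\lambda f)=0\}$ and $\|f\|_{L_e}=\inf\{\lambda>0:\mathcal E_e(\lambda^{-1}f)\le1\}$ on $M(\mathcal E_e)$. A measurable $A\subseteq X$ is $\mathcal E$-invariant if $\mathcal E(1_Af)\le\mathcal E(f)$ for all $f\in L^2(\mu)$; $\mathcal E$ is irreducible if every $\mathcal E$-invariant set is null or co-null. *)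

From HB Require Import structures.
From mathcomp Require Import all_boot all_order all_algebra.
From mathcomp Require Import all_classical all_reals all_analysis.
Set Implicit Arguments. Unset Strict Implicit. Unset Printing Implicit Defensive.
Import Order.TTheory GRing.Theory Num.Theory.
Import numFieldNormedType.Exports.
Local Open Scope classical_set_scope.
Local Open Scope ring_scope.

Section NonlinearDirichlet.
Context {d : measure_display} {T : measurableType d} {R : realType}.
Variable mu : {measure set T -> \bar R}.

Definition L2 (f : T -> R) : Prop :=
  measurable_fun setT f /\ (\int[mu]_x ((`|f x| ^+ 2)%:E) < +oo)%E.

Definition L2_conv (g : nat -> T -> R) (f : T -> R) : Prop :=
  (fun n => (\int[mu]_x ((`|g n x - f x| ^+ 2)%:E))%E) @ \oo --> 0%E.

Definition loc_meas_conv (g : nat -> T -> R) (f : T -> R) : Prop :=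
  forall A, measurable A -> (mu A < +oo)%E ->
  forall eps : R, 0 < eps ->
    (fun n => mu (A `&` [set x | eps < `|g n x - f x|])) @ \oo --> 0%E.

(* A nonlinear Dirichlet form, given as a functional on representatives
   of L^2 classes (its values on non-L^2 functions are irrelevant). *)
Definition nonlinear_dirichlet_form (E : (T -> R) -> \bar R) : Prop :=
  [/\ (
      (forall f g, L2 f -> L2 g -> {ae mu, forall x, f x = g x} -> E f = E g) /\
      (forall f, L2 f -> (0 <= E f)%E)),
      (forall f g (t : R), L2 f -> L2 g -> 0 <= t <= 1 ->
         (E (fun x => (t * f x + (1 - t) * g x)%R)
           <= t%:E * E f + (1 - t)%R%:E * E g)%E),
      (* lower semicontinuity on L^2 (L^2 is metrizable, so sequential) *)
      (forall (g : nat -> T -> R) f, (forall n, L2 (g n)) -> L2 f ->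
         L2_conv g f -> (E f <= limn_einf (fun n => E (g n)))%E),
      ((forall f, L2 f -> E (fun x => - f x) = E f) /\ E (fun _ => 0) = 0%E) &
      forall f g (C : R -> R),
        L2 f -> L2 g -> C 0 = 0 -> (forall a b, `|C a - C b| <= `|a - b|) ->
        (E (fun x => (f x + C (g x))%R) + E (fun x => (f x - C (g x))%R)
          <= E (fun x => (f x + g x)%R) + E (fun x => (f x - g x)%R))%E].

Definition Eext (E : (T -> R) -> \bar R) (f : T -> R) : \bar R :=
  if `[< L2 f >] then E f else +oo%E.

(* Lower semicontinuous relaxation on L^0 w.r.t. local convergence in
   measure (metrizable for sigma-finite mu, hence sequential form). *)
Definition Ee (E : (T -> R) -> \bar R) (f : T -> R) : \bar R :=
  ereal_inf [set limn_einf (fun n => Eext E (g n)) | g in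
               [set g : nat -> T -> R | (forall n, measurable_fun setT (g n))
                                        /\ loc_meas_conv g f]].

Definition ME (E : (T -> R) -> \bar R) (f : T -> R) : Prop :=
  (fun l : R => Ee E (fun x => l * f x)) @ 0^'+ --> 0%E.

Definition normLe (E : (T -> R) -> \bar R) (f : T -> R) : \bar R :=
  ereal_inf [set l%:E | l in [set l : R | 0 < l /\ (Ee E (fun x => (l^-1 * f x)%R) <= 1)%E]].

(* ker ||.||_{L_e} (elements of L^0 = measurable functions, in M(E_e)) *)
Definition kerLe (E : (T -> R) -> \bar R) (h : T -> R) : Prop :=
  [/\ measurable_fun setT h, ME E h & normLe E h = 0%E].

Definition E_invariant (E : (T -> R) -> \bar R) (A : set T) : Prop :=
  measurable A /\
  forall f, L2 f -> (E (fun x => (\1_A x * f x)%R) <= E f)%E.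

Definition irreducible (E : (T -> R) -> \bar R) : Prop :=
  forall A, E_invariant E A -> mu A = 0%E \/ mu (~` A) = 0%E.

End NonlinearDirichlet.

(* For [h] in the kernel of the gauge, every multiple [lam * h] is a limit in
   measure of functions of arbitrarily small energy.  Truncating [u] at the
   level [lam * (h - alpha)^+] therefore costs no energy: truncating at the
   approximants instead costs at most twice their energy, by the contraction
   property applied through [min] and [max], and these truncations converge in
   [L^2] by domination by [u], so lower semicontinuity applies.  As [lam] grows
   the truncations converge to [1_{h > alpha} u], which gives (a).  Under
   irreducibility, (a) for [h] and [-h] makes every level set [{h > r}] and
   [{h < r}] null or conull, which forces [h] to be a.e. constant. *)

From HB Require Import structures.
From mathcomp Require Import all_boot all_order all_algebra.
From mathcomp Require Import all_classical all_reals all_analysis.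
From mathcomp Require Import measurable_realfun.
From mathcomp Require Import lra.
Import Order.TTheory GRing.Theory Num.Theory.
Import numFieldNormedType.Exports.
Local Open Scope classical_set_scope.
Local Open Scope ring_scope.

Section extended_reals.
Context {R : realType}.
Local Open Scope ereal_scope.
Implicit Types u : nat -> \bar R.

Lemma cvge0P u : (forall n, 0 <= u n) ->
  u @ \oo --> 0 <-> forall e : R, (0 < e)%R -> \forall n \near \oo, u n <= e%:E.
Proof.
move=> u0; split=> [/fine_cvgP[ufin /cvgr0Pnorm_le uc] e e0|ue].
  apply: filterS2 ufin (uc e e0) => n /= ufin' ue.
  by rewrite -(fineK ufin') lee_fin (le_trans (ler_norm _) ue).
apply/fine_cvgP; split.
  by apply: filterS (ue 1%R ltr01) => n; move: (u0 n); case: (u n).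
apply/cvgr0Pnorm_le => e e0; apply: filterS (ue e e0) => n /=.
by move: (u0 n); case: (u n) => //= r; rewrite !lee_fin => r0 re; rewrite ger0_norm.
Qed.

Lemma limn_einf_lt u a : limn_einf u < a -> forall N, exists2 n, (N <= n)%N & u n < a.
Proof.
move=> ua N; apply: contrapT => nua.
suff : a <= limn_einf u by rewrite leNgt ua.
rewrite limn_einf_lim; apply: lime_ge; first exact: is_cvg_einfs.
near=> m; apply: le_ereal_inf_tmp => _ [n /= mn <-].
rewrite leNgt; apply/negP => una; apply: nua; exists n => //.
by apply: leq_trans mn; near: m; exists N.
Unshelve. all: by end_near. Qed.

Lemma limn_einf_le u b : (forall n, u n <= b) -> limn_einf u <= b.
Proof.
move=> ub; rewrite limn_einf_lim; apply: lime_le; first exact: is_cvg_einfs.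
by apply: nearW => m; apply: le_trans (ub m); apply: ereal_inf_lbound; exists m => /=.
Qed.

Lemma lee_double (x y : \bar R) : x + x <= y + y -> x <= y.
Proof.
case: x => [r| |]; case: y => [s| |] //=; rewrite ?leey ?leNye //.
by rewrite !lee_fin; lra.
Qed.

End extended_reals.

Lemma contraction_continuous {R : realType} (C : R -> R) :
  (forall a b, `|C a - C b| <= `|a - b|) -> continuous C.
Proof.
move=> HC x; apply/cvgrPdist_lt => e e0; near=> y; apply: le_lt_trans (HC x y) _.
by near: y; exact: (@cvgr_dist_lt _ _ _ _ _ id x (@cvg_id _ _) e e0).
Unshelve. all: by end_near. Qed.

Section clamp.
Context {R : realDomainType}.
Implicit Types a b c t w : R.

Definition ramp c t := Num.max (t - c) 0.
Definition clamp a w := Num.max (Num.min a w) (- w).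

Lemma normr_bounds a : - `|a| <= a /\ a <= `|a|.
Proof. by rewrite ler_norm lerNnormlW. Qed.

Lemma ler_norm_dist a b : a - b <= `|a - b| /\ b - a <= `|a - b|.
Proof. by rewrite ler_norm distrC ler_norm. Qed.

Lemma ramp_ge0 c t : 0 <= ramp c t.
Proof. by rewrite /ramp le_max lexx orbT. Qed.

Lemma ramp_lip c a b : `|ramp c a - ramp c b| <= `|a - b|.
Proof.
have [? ?] := ler_norm_dist a b.
rewrite /ramp; case: (leP (a - c) 0) => ?; case: (leP (b - c) 0) => ?;
  rewrite ler_norml; apply/andP; split; lra.
Qed.

Lemma rampZ k c t : 0 <= k -> ramp (k * c) (k * t) = k * ramp c t.
Proof. by move=> k0; rewrite /ramp -mulrBr maxr_pMr // mulr0. Qed.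

Lemma ramp_gt0 c t : c < t -> 0 < ramp c t.
Proof. by move=> ct; rewrite /ramp lt_max subr_gt0 ct. Qed.

Lemma ramp_eq0 c t : t <= c -> ramp c t = 0.
Proof. by move=> tc; rewrite /ramp; apply/max_idPr; rewrite subr_le0. Qed.

Lemma ramp0 c : 0 <= c -> ramp c 0 = 0.
Proof. exact: ramp_eq0. Qed.

Lemma clamp_abs a w : 0 <= w -> `|clamp a w| <= `|a|.
Proof.
move=> w0; have [? ?] := normr_bounds a.
rewrite /clamp; case: (leP a w) => ?; [case: (leP a (- w))|case: (leP w (- w))] => ?;
  rewrite ler_norml; apply/andP; split; lra.
Qed.

Lemma clamp_lip a w w' : 0 <= w -> 0 <= w' -> `|clamp a w - clamp a w'| <= `|w - w'|.
Proof.
move=> w0 w'0; have [? ?] := ler_norm_dist w w'.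
rewrite /clamp; case: (leP a w) => ?; case: (leP a w') => ?;
  [ case: (leP a (- w)); case: (leP a (- w'))
  | case: (leP a (- w)); case: (leP w' (- w'))
  | case: (leP w (- w)); case: (leP a (- w'))
  | case: (leP w (- w)); case: (leP w' (- w')) ] => ? ?;
  rewrite ler_norml; apply/andP; split; lra.
Qed.

Lemma clamp_id a w : `|a| <= w -> clamp a w = a.
Proof.
rewrite ler_norml => /andP[? ?]; rewrite /clamp.
by rewrite (min_idPl _) // (max_idPl _).
Qed.

Lemma clamp0 a : clamp a 0 = 0.
Proof. by rewrite /clamp oppr0; case: (leP a 0) => ?; rewrite ?maxxx // (max_idPr _) // ltW. Qed.

End clamp.

Lemma clamp_scale_eventually {R : realType} (a w : R) : 0 < w ->
  \forall n \near \oo, clamp a (n.+1%:R * w) = a.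
Proof.
move=> w0; near=> n; apply: clamp_id.
have : `|a| / w < n%:R by near: n; exact: nbhs_infty_gtr.
rewrite ltr_pdivrMr // => /ltW/le_trans; apply.
by apply: ler_wpM2r; rewrite ?ler_nat // ltW.
Unshelve. all: by end_near. Qed.

Section square_integrable.
Context {d : measure_display} {T : measurableType d} {R : realType}.
Context {mu : {measure set T -> \bar R}}.
Local Notation L2 := (L2 mu).
Implicit Types F f g u w : T -> R.

Lemma measurable_set_gt {f} a : measurable_fun setT f -> measurable [set x | a < f x].
Proof.
move=> mf; have := mf measurableT _ (measurable_itv `]a, +oo[).
by rewrite setTI; congr measurable; apply/seteqP; split => x /=; rewrite in_itv /= andbT.
Qed.

Lemma measurable_set_lt {f} a : measurable_fun setT f -> measurable [set x | f x < a].
Proof.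
move=> mf; have := mf measurableT _ (measurable_itv `]-oo, a[).
by rewrite setTI; congr measurable; apply/seteqP; split => x /=; rewrite in_itv.
Qed.

Lemma measurable_set_le {f} a : measurable_fun setT f -> measurable [set x | f x <= a].
Proof.
move=> mf; have := mf measurableT _ (measurable_itv `]-oo, a]).
by rewrite setTI; congr measurable; apply/seteqP; split => x /=; rewrite in_itv.
Qed.

Lemma measurable_sqr_norm f : measurable_fun setT f ->
  measurable_fun setT (fun x => (`|f x| ^+ 2)%:E : \bar R).
Proof.
move=> mf; apply/measurable_EFinP; apply: measurable_funX.
exact: measurableT_comp (@normr_measurable _ _) mf.
Qed.

Lemma L2_measurable {f} : L2 f -> measurable_fun setT f.
Proof. by case. Qed.

Lemma L2_cst0 : L2 (fun _ => 0).
Proof.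
split; first exact: measurable_cst.
by under eq_integral do rewrite normr0 expr0n; rewrite integral0.
Qed.

Lemma L2_le2 {F f g} : measurable_fun setT F -> L2 f -> L2 g ->
  (forall x, `|F x| <= `|f x| + `|g x|) -> L2 F.
Proof.
move=> mF [mf If] [mg Ig] Ffg; split=> //.
have sq2 x : (`|F x| ^+ 2 <= 2 * `|f x| ^+ 2 + 2 * `|g x| ^+ 2)%R.
  have : (`|F x| ^+ 2 <= (`|f x| + `|g x|) ^+ 2)%R.
    by rewrite ler_sqr ?nnegrE ?addr_ge0 // Ffg.
  by move/le_trans; apply; have := sqr_ge0 (`|f x| - `|g x|); lra.
apply: (@le_lt_trans _ _
  (\int[mu]_x (2%:E * (`|f x| ^+ 2)%:E + 2%:E * (`|g x| ^+ 2)%:E))%E).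
  apply: ge0_le_integral.
  - by [].
  - by move=> x _; rewrite lee_fin sqr_ge0.
  - exact: measurable_sqr_norm.
  - by apply: emeasurable_funD; apply: measurable_funeM; exact: measurable_sqr_norm.
  - by move=> x _; rewrite -!EFinM -EFinD lee_fin sq2.
rewrite ge0_integralD //; try by apply: measurable_funeM; exact: measurable_sqr_norm.
rewrite !ge0_integralZl_EFin //; try exact: measurable_sqr_norm;
  try by move=> x _; rewrite lee_fin sqr_ge0.
by apply: lte_add_pinfty; apply: lte_mul_pinfty.
Qed.

Lemma L2_le {F f} : measurable_fun setT F -> L2 f -> (forall x, `|F x| <= `|f x|) -> L2 F.
Proof.
move=> mF Lf Ff; apply: (L2_le2 mF Lf L2_cst0) => x /=.
by rewrite normr0 addr0.
Qed.

Lemma L2N {f} : L2 f -> L2 (fun x => - f x).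
Proof.
move=> Lf; apply: (L2_le (measurable_funN (L2_measurable Lf)) Lf) => x.
by rewrite normrN.
Qed.

Lemma measurable_contraction {C : R -> R} {g} : (forall a b, `|C a - C b| <= `|a - b|) ->
  measurable_fun setT g -> measurable_fun setT (fun x => C (g x)).
Proof.
move=> HC mg; apply: measurableT_comp mg.
by apply: continuous_measurable_fun; exact: contraction_continuous.
Qed.

Lemma L2_contraction {C : R -> R} {g} : C 0 = 0 ->
  (forall a b, `|C a - C b| <= `|a - b|) -> L2 g -> L2 (fun x => C (g x)).
Proof.
move=> C0 HC Lg; apply: (L2_le (measurable_contraction HC (L2_measurable Lg)) Lg) => x.
by have := HC (g x) 0; rewrite C0 !subr0.
Qed.

Lemma measurable_clamp {u w} : measurable_fun setT u -> measurable_fun setT w ->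
  measurable_fun setT (fun x => clamp (u x) (w x)).
Proof.
move=> mU mW; apply: (measurable_maxr (f := fun x => Num.min (u x) (w x))).
  exact: measurable_minr mU mW.
exact: measurable_funN mW.
Qed.

Lemma L2_clamp {u w} : L2 u -> measurable_fun setT w -> (forall x, 0 <= w x) ->
  L2 (fun x => clamp (u x) (w x)).
Proof.
move=> Lu mw w0; apply: (L2_le _ Lu) => [|x]; last exact: clamp_abs.
exact: measurable_clamp (L2_measurable Lu) mw.
Qed.

End square_integrable.

Section dirichlet_form.
Context {d : measure_display} {T : measurableType d} {R : realType}.
Context {mu : {measure set T -> \bar R}} {E : (T -> R) -> \bar R}.
Hypothesis HE : nonlinear_dirichlet_form mu E.
Local Notation L2 := (L2 mu).
Implicit Types f g u v w : T -> R.

Lemma dform_ge0 {f} : L2 f -> (0 <= E f)%E.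
Proof. by case: HE => [[_ E0] _ _ _ _]; exact: E0. Qed.

Lemma dformN {f} : L2 f -> E (fun x => - f x) = E f.
Proof. by case: HE => _ _ _ [EN _] _; exact: EN. Qed.

Lemma dform0 : E (fun _ => 0) = 0%E.
Proof. by case: HE => _ _ _ []. Qed.

Lemma dform_contraction {C : R -> R} {g} : C 0 = 0 ->
  (forall a b, `|C a - C b| <= `|a - b|) -> L2 g -> (E (fun x => C (g x)) <= E g)%E.
Proof.
move=> C0 HC Lg; case: HE => _ _ _ _ Ec.
have := Ec _ g C L2_cst0 Lg C0 HC.
under eq_fun do rewrite add0r.
under [X in (_ + E X)%E]eq_fun do rewrite add0r.
under [X in (_ <= E X + _)%E]eq_fun do rewrite add0r.
under [X in (_ <= _ + E X)%E]eq_fun do rewrite add0r.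
by rewrite !dformN //; [exact: lee_double | exact: L2_contraction].
Qed.

Lemma L2_min {u v} : L2 u -> L2 v -> L2 (fun x => Num.min (u x) (v x)).
Proof.
move=> Lu Lv; apply: (L2_le2 _ Lu Lv) => [|x].
  exact: measurable_minr (L2_measurable Lu) (L2_measurable Lv).
by case: (leP (u x) (v x)) => _; rewrite ?lerDl ?lerDr.
Qed.

Lemma L2_max {u v} : L2 u -> L2 v -> L2 (fun x => Num.max (u x) (v x)).
Proof.
move=> Lu Lv; apply: (L2_le2 _ Lu Lv) => [|x].
  exact: measurable_maxr (L2_measurable Lu) (L2_measurable Lv).
by case: (leP (u x) (v x)) => _; rewrite ?lerDl ?lerDr.
Qed.

(* The contraction property for [t |-> - |t|] at [(u + v) / 2] and [(u - v) / 2]. *)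
Lemma dform_min_max {u v} : L2 u -> L2 v ->
  (E (fun x => Num.min (u x) (v x)) + E (fun x => Num.max (u x) (v x)) <= E u + E v)%E.
Proof.
move=> Lu Lv; case: HE => _ _ _ _ Ec.
have [mU mV] := (L2_measurable Lu, L2_measurable Lv).
have half_le (a b : R) : `|(a + b) / 2| <= `|a| + `|b| /\ `|(a - b) / 2| <= `|a| + `|b|.
  have [? ?] := normr_bounds a; have [? ?] := normr_bounds b.
  by rewrite !ler_norml; split; apply/andP; split; lra.
have Lp : L2 (fun x => (u x + v x) / 2).
  apply: (L2_le2 _ Lu Lv) => [|x]; last exact: (half_le _ _).1.
  exact: measurable_funM (measurable_funD mU mV) (measurable_cst _).
have Lm : L2 (fun x => (u x - v x) / 2).
  apply: (L2_le2 _ Lu Lv) => [|x]; last exact: (half_le _ _).2.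
  exact: measurable_funM (measurable_funB mU mV) (measurable_cst _).
have HC (a b : R) : `|- `|a| - - `|b| | <= `|a - b| by rewrite -opprD normrN ler_dist_dist.
have C0 : - `|0 : R| = 0 by rewrite normr0 oppr0.
have := Ec _ _ (fun t => - `|t|) Lp Lm C0 HC.
congr (_ + _ <= _ + _)%E; congr E; apply/funext => x /=; try lra.
  by case: (leP (u x) (v x)) => ?; [rewrite ler0_norm | rewrite ger0_norm]; lra.
by case: (leP (u x) (v x)) => ?; [rewrite ler0_norm | rewrite ger0_norm]; lra.
Qed.

Lemma dform_min {u v} : L2 u -> L2 v -> (E (fun x => Num.min (u x) (v x)) <= E u + E v)%E.
Proof.
move=> Lu Lv; apply: le_trans (dform_min_max Lu Lv).
by rewrite leeDl // (dform_ge0 (L2_max Lu Lv)).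
Qed.

Lemma dform_max {u v} : L2 u -> L2 v -> (E (fun x => Num.max (u x) (v x)) <= E u + E v)%E.
Proof.
move=> Lu Lv; apply: le_trans (dform_min_max Lu Lv).
by rewrite leeDr // (dform_ge0 (L2_min Lu Lv)).
Qed.

Lemma dform_clamp {u w} : L2 u -> L2 w ->
  (E (fun x => clamp (u x) (w x)) <= E u + E w + E w)%E.
Proof.
move=> Lu Lw; apply: le_trans (dform_max (L2_min Lu Lw) (L2N Lw)) _.
by rewrite dformN // leeD2r // dform_min.
Qed.

Lemma dform_scale {f} (t : R) : L2 f -> 0 <= t <= 1 ->
  (E (fun x => (t * f x)%R) <= t%:E * E f)%E.
Proof.
move=> Lf t01; case: HE => _ Ecvx _ _ _.
have := Ecvx f _ t Lf L2_cst0 t01; rewrite dform0 mule0 adde0.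
by under eq_fun do rewrite mulr0 addr0.
Qed.

Lemma dform_L2_conv_le {g : nat -> T -> R} {f} {b : \bar R} :
  (forall n, L2 (g n)) -> L2 f -> L2_conv mu g f -> (forall n, (E (g n) <= b)%E) ->
  (E f <= b)%E.
Proof.
move=> Lg Lf gf gb; case: HE => _ _ Elsc _ _.
exact: le_trans (Elsc g f Lg Lf gf) (limn_einf_le _ _ gb).
Qed.

End dirichlet_form.

Lemma sqr_normB_le {R : realDomainType} (a b c : R) :
  `|a| <= `|c| -> `|b| <= `|c| -> `|a - b| ^+ 2 <= 4 * `|c| ^+ 2.
Proof.
move=> ac bc; have : `|a - b| <= 2 * `|c| by apply: le_trans (ler_normB a b) _; lra.
by rewrite -ler_sqr ?nnegrE ?mulr_ge0 // exprMn; lra.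
Qed.

Section convergence.
Context {d : measure_display} {T : measurableType d} {R : realType}.
Context {mu : {measure set T -> \bar R}}.
Local Notation L2 := (L2 mu).

Lemma measurable_normB {f g : T -> R} : measurable_fun setT f -> measurable_fun setT g ->
  measurable_fun setT (fun x => `|f x - g x|).
Proof. by move=> mf mg; apply: measurableT_comp (measurable_funB mf mg). Qed.

Lemma cvg_integral0_dominated (F : nat -> T -> R) (G : T -> R) :
  (forall n, measurable_fun setT (F n)) -> measurable_fun setT G ->
  (\int[mu]_x (G x)%:E < +oo)%E -> (forall n x, 0 <= F n x <= G x) ->
  (forall x, F ^~ x @ \oo --> 0) -> (fun n => \int[mu]_x (F n x)%:E)%E @ \oo --> 0%E.
Proof.
move=> mF mG IG FG F0.
have G0 x : 0 <= G x by have /andP[] := FG 0%N x; exact: le_trans.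
have := @dominated_cvg _ _ _ mu setT measurableT (fun n x => (F n x)%:E) (cst 0%E)
  (fun x => (G x)%:E).
rewrite integral0; apply => //.
- by move=> n; apply/measurable_EFinP; exact: mF.
- by move=> x _; apply: cvg_EFin; [exact: nearW | exact: F0].
- apply/integrableP; split; first exact/measurable_EFinP.
  by under eq_integral do rewrite abse_EFin ger0_norm //.
- by move=> n x _; rewrite abse_EFin lee_fin; have /andP[? ?] := FG n x; rewrite ger0_norm.
Qed.

Lemma sqr_dominator_integrable {u} : L2 u ->
  measurable_fun setT (fun x => 4 * `|u x| ^+ 2) /\
  (\int[mu]_x ((4 * `|u x| ^+ 2)%:E) < +oo)%E.
Proof.
move=> [mU Iu]; split.
  by apply: measurable_funM; [exact: measurable_cst | exact/measurable_EFinP/measurable_sqr_norm].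
under eq_integral do rewrite EFinM.
rewrite ge0_integralZl_EFin //; first exact: lte_mul_pinfty.
all: by [move=> x _; rewrite lee_fin sqr_ge0 | exact: measurable_sqr_norm].
Qed.

Lemma L2_conv_pointwise {z : nat -> T -> R} {y u : T -> R} : L2 u ->
  (forall n, measurable_fun setT (z n)) -> measurable_fun setT y ->
  (forall n x, `|z n x| <= `|u x|) -> (forall x, `|y x| <= `|u x|) ->
  (forall x, z ^~ x @ \oo --> y x) -> L2_conv mu z y.
Proof.
move=> Lu mz my zu yu zy; have [mG IG] := sqr_dominator_integrable Lu.
apply: (cvg_integral0_dominated (fun n x => `|z n x - y x| ^+ 2) _ _ mG IG) => [n|n x|x].
- exact/measurable_funX/measurable_normB.
- by rewrite sqr_ge0 sqr_normB_le.
- have zyx : (fun n => z n x - y x) @ \oo --> 0.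
    by rewrite -(subrr (y x)); apply: cvgB (zy x) (cvg_cst _).
  rewrite -(mulr0 0) -(@normr0 _ R^o); under eq_fun do rewrite expr2.
  by apply: cvgM; apply: cvg_norm.
Qed.

Lemma loc_meas_conv_le {z g : nat -> T -> R} {y f : T -> R} :
  (forall n, measurable_fun setT (z n)) -> measurable_fun setT y ->
  (forall n, measurable_fun setT (g n)) -> measurable_fun setT f ->
  (forall n x, `|z n x - y x| <= `|g n x - f x|) ->
  loc_meas_conv mu g f -> loc_meas_conv mu z y.
Proof.
move=> mz my mg mf zg gf A mA muA eps eps0.
apply/cvge0P => [n|e e0]; first exact: measure_ge0.
have /(cvge0P _ (fun n => measure_ge0 _ _))/(_ e e0) := gf A mA muA eps eps0.
apply: filterS => n; apply: le_trans; apply: le_measure; rewrite ?inE.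
- exact/measurableI/measurable_set_gt/measurable_normB.
- exact/measurableI/measurable_set_gt/measurable_normB.
- by move=> x [Ax zyx]; split => //=; exact: lt_le_trans zyx (zg n x).
Qed.

Lemma loc_meas_convN {g : nat -> T -> R} {f : T -> R} :
  loc_meas_conv mu g f -> loc_meas_conv mu (fun n x => - g n x) (fun x => - f x).
Proof.
move=> gf A mA muA eps eps0.
under eq_fun do under eq_set do rewrite -opprD normrN.
exact: gf.
Qed.

Lemma loc_meas_convZ (c : R) {g : nat -> T -> R} {f : T -> R} : 0 < c ->
  loc_meas_conv mu g f -> loc_meas_conv mu (fun n x => c * g n x) (fun x => c * f x).
Proof.
move=> c0 gf A mA muA eps eps0.
under eq_fun do under eq_set do rewrite -mulrBr normrM gtr0_norm // -ltr_pdivrMl //.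
by apply: gf; rewrite // mulr_gt0 ?invr_gt0.
Qed.

Lemma loc_meas_conv_comp {phi : nat -> nat} {g : nat -> T -> R} {f : T -> R} :
  phi @ \oo --> \oo -> loc_meas_conv mu g f -> loc_meas_conv mu (fun n => g (phi n)) f.
Proof. by move=> phioo gf A mA muA eps eps0; exact: cvg_comp phioo (gf A mA muA eps eps0). Qed.

Lemma integrable_tail {G : T -> R} : measurable_fun setT G -> (forall x, 0 <= G x) ->
  (\int[mu]_x (G x)%:E < +oo)%E -> forall e : R, 0 < e ->
  exists S : set T, exists2 M : R, 0 < M & [/\ measurable S, (mu S < +oo)%E,
    (forall x, S x -> G x <= M) & (\int[mu]_x ((G x * \1_(~` S) x)%:E) <= e%:E)%E].
Proof.
move=> mG G0 IG e e0.
pose S n := [set x | 1 < n.+1%:R * G x] `&` [set x | G x <= n.+1%:R].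
have mS n : measurable (S n).
  apply: measurableI; last exact: measurable_set_le.
  exact/measurable_set_gt/measurable_funM.
have mGS n : measurable_fun setT (fun x => G x * \1_(~` S n) x).
  exact/measurable_funM/measurable_indic/measurableC.
have tail0 : (fun n => \int[mu]_x ((G x * \1_(~` S n) x)%:E))%E @ \oo --> 0%E.
  apply: (cvg_integral0_dominated _ _ mGS mG IG) => [n x|x].
    by rewrite indicE; case: (_ \in _); rewrite ?mulr1 ?mulr0 lexx G0.
  apply: cvg_near_cst; have [->|Gx0] := eqVneq (G x) 0.
    by apply: nearW => n; rewrite mul0r.
  have Gx : 0 < G x by rewrite lt0r Gx0 G0.
  near=> n; rewrite indicE memNset ?mulr0 //= => -[] //; split => /=.
    have : (G x)^-1 < n%:R by near: n; exact: nbhs_infty_gtr.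
    rewrite -div1r ltr_pdivrMr // => /lt_le_trans; apply.
    by apply: ler_wpM2r; rewrite ?ler_nat // ltW.
  have : G x <= n%:R by near: n; exact: nbhs_infty_ger.
  by move/le_trans; apply; rewrite ler_nat.
have tail_ge0 n : (0 <= \int[mu]_x ((G x * \1_(~` S n) x)%:E))%E.
  by apply: integral_ge0 => x _; rewrite lee_fin mulr_ge0.
near \oo => N.
exists (S N); exists N.+1%:R; first by [].
split => //; [|by move=> x [] | by near: N; exact: (cvge0P _ tail_ge0).1 tail0 e e0].
(* Markov: [\1_(S N) <= N.+1 * G] *)
apply: (@le_lt_trans _ _ (N.+1%:R%:E * \int[mu]_x (G x)%:E)%E); last exact: lte_mul_pinfty.
rewrite -ge0_integralZl_EFin //; last 2 first.
- by move=> x _; rewrite lee_fin.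
- exact/measurable_EFinP.
rewrite -(setIT (S N)) -integral_indic //.
apply: ge0_le_integral => //.
- exact/measurable_EFinP/measurable_indic.
- by apply: measurable_funeM; exact/measurable_EFinP.
- move=> x _; rewrite -EFinM lee_fin indicE.
  by case: (boolP (x \in S N)) => [/set_mem[/ltW] //|_]; rewrite mulr_ge0.
Unshelve. all: by end_near. Qed.

Lemma ge0_integral_indic_sum (H : T -> R) (S B : set T) (a b : R) :
  measurable S -> measurable B -> measurable_fun setT H -> (forall x, 0 <= H x) ->
  0 <= a -> 0 <= b ->
  (\int[mu]_x ((H x + a * \1_S x + b * \1_B x)%:E) =
   \int[mu]_x (H x)%:E + a%:E * mu S + b%:E * mu B)%E.
Proof.
move=> mS mB mH H0 a0 b0.
have mI (A : set T) c : measurable A -> measurable_fun setT (fun x => (c * \1_A x)%:E : \bar R).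
  by move=> mA; exact/measurable_EFinP/measurable_funM/measurable_indic.
have I0 (A : set T) c x : 0 <= c -> (0 <= (c * \1_A x)%:E)%E.
  by move=> c0; rewrite lee_fin mulr_ge0.
under eq_integral do rewrite !EFinD.
rewrite ge0_integralD //; last 4 first.
- by move=> x _; apply: adde_ge0; [rewrite lee_fin | exact: I0].
- by apply: emeasurable_funD; [exact/measurable_EFinP | exact: mI].
- by move=> x _; exact: I0.
- exact: mI.
rewrite ge0_integralD //; last 4 first.
- by move=> x _; rewrite lee_fin.
- exact/measurable_EFinP.
- by move=> x _; exact: I0.
- exact: mI.
under [X in (_ + X + _)%E]eq_integral do rewrite EFinM.
under [X in (_ + X)%E]eq_integral do rewrite EFinM.
rewrite !ge0_integralZl_EFin // ?integral_indic ?setIT //.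
all: by [exact/measurable_EFinP/measurable_indic | move=> x _; rewrite lee_fin].
Qed.

Lemma integral_sqr_split {f G : T -> R} {S : set T} {M : R} (th : R) :
  measurable_fun setT f -> measurable_fun setT G -> measurable S ->
  (forall x, `|f x| ^+ 2 <= G x) -> (forall x, S x -> G x <= M) -> 0 < M -> 0 < th <= 1 ->
  (\int[mu]_x ((`|f x| ^+ 2)%:E) <= \int[mu]_x ((G x * \1_(~` S) x)%:E) + th%:E * mu S
     + M%:E * mu (S `&` [set x | (th < `|f x|)%R]))%E.
Proof.
move=> mf mG mS fG SM M0 /andP[th0 th1].
set B := S `&` _; have mB : measurable B.
  by apply: measurableI => //; apply: measurable_set_gt; exact: measurableT_comp mf.
have fG0 x : 0 <= G x := le_trans (sqr_ge0 _) (fG x).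
rewrite -ge0_integral_indic_sum //; last 4 first.
- exact/measurable_funM/measurable_indic/measurableC.
- by move=> x; rewrite mulr_ge0.
- exact: ltW.
- exact: ltW.
apply: ge0_le_integral => //.
- apply/measurable_EFinP/measurable_funX; exact: measurableT_comp mf.
- apply/measurable_EFinP; apply: measurable_funD; first apply: measurable_funD.
  + exact/measurable_funM/measurable_indic/measurableC.
  + exact/measurable_funM/measurable_indic.
  + exact/measurable_funM/measurable_indic.
move=> x _; rewrite lee_fin !indicE; case: (boolP (x \in S)) => [/set_mem Sx|Sx].
  rewrite memNset //= mulr0 mulr1 add0r.
  case: (boolP (x \in B)) => [_|/negP xB].
    by rewrite mulr1 (le_trans (fG x)) // (le_trans (SM x Sx)) // lerDr ltW.
  have fth : `|f x| <= th by rewrite leNgt; apply/negP => ?; apply: xB; exact/mem_set.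
  rewrite mulr0 addr0 expr2; apply: le_trans (_ : th * 1 <= th); last by rewrite mulr1.
  by apply: ler_pM => //; apply: le_trans th1.
have xB : x \notin B by rewrite in_setI (negbTE Sx).
by rewrite in_setC Sx (negbTE xB) !mulr0 mulr1 !addr0 fG.
Qed.

(* With [integrable_tail] for [e / 3], the three terms of [integral_sqr_split]
   are each eventually at most [e / 3] for a small threshold [th]. *)
Lemma L2_conv_loc_meas {z : nat -> T -> R} {y G : T -> R} :
  (forall n, measurable_fun setT (z n)) -> measurable_fun setT y ->
  measurable_fun setT G -> (\int[mu]_x (G x)%:E < +oo)%E ->
  (forall n x, `|z n x - y x| ^+ 2 <= G x) -> loc_meas_conv mu z y -> L2_conv mu z y.
Proof.
move=> mz my mG IG zyG zy.
have G0 x : 0 <= G x := le_trans (sqr_ge0 _) (zyG 0%N x).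
apply/cvge0P => [n|e e0]; first by apply: integral_ge0 => x _; rewrite lee_fin sqr_ge0.
have e3 : 0 < e / 3 by rewrite divr_gt0.
have [S [M M0 [mS muS SM tailS]]] := integrable_tail mG G0 IG _ e3.
have [m m0 muSE] : exists2 m : R, 0 <= m & mu S = m%:E.
  by exists (fine (mu S)); rewrite ?fine_ge0 // fineK // ge0_fin_numE.
pose th := Num.min (e / 3 / (m + 1)) 1.
have th0 : 0 < th by rewrite lt_min ltr01 andbT divr_gt0 // ltr_wpDl.
have [thm th1] : th * m <= e / 3 /\ th <= 1.
  split; last by rewrite ge_min lexx orbT.
  apply: (@le_trans _ _ (e / 3 / (m + 1) * m)); first by rewrite ler_wpM2r // ge_min lexx.
  by rewrite mulrAC ler_pdivrMr ?ler_pM2l; lra.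
have /(cvge0P _ (fun n => measure_ge0 _ _))/(_ (e / 3 / M) (divr_gt0 e3 M0)) :=
  zy S mS muS th th0.
apply: filterS => k muB.
apply: le_trans (integral_sqr_split th (measurable_funB (mz k) my) mG mS (zyG k) SM M0 _) _.
  by rewrite th0 th1.
rewrite muSE; apply: le_trans (leeD (leeD tailS (lexx _)) (lee_wpmul2l _ muB)) _.
  by rewrite lee_fin ltW.
by rewrite -!EFinM -!EFinD lee_fin mulrCA divff ?gt_eqF // mulr1; lra.
Qed.

End convergence.

Section relaxation.
Context {d : measure_display} {T : measurableType d} {R : realType}.
Context {mu : {measure set T -> \bar R}} {E : (T -> R) -> \bar R}.
Local Notation L2 := (L2 mu).

Lemma Ee_lt_approx f (a : R) : (Ee mu E f < a%:E)%E ->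
  exists g : nat -> T -> R, (forall k, L2 (g k) /\ (E (g k) < a%:E)%E) /\ loc_meas_conv mu g f.
Proof.
move/ereal_inf_lt => [_ [g [mg gf] <-] /limn_einf_lt ga].
have /choice[phi phiP] : forall N, exists n, (N <= n)%N /\ (Eext mu E (g n) < a%:E)%E.
  by move=> N; have [n] := ga N; exists n.
exists (fun k => g (phi k)); split.
  move=> k; have [_] := phiP k; rewrite /Eext.
  by case: asboolP => [Lg|_]; [split | rewrite ltNge leey].
apply: loc_meas_conv_comp gf; apply/cvgnyPge => N.
by near=> k; apply: leq_trans (phiP k).1; near: k; exists N.
Unshelve. all: by end_near. Qed.

End relaxation.

Definition vanishing_energy {d : measure_display} {T : measurableType d} {R : realType}
    (mu : {measure set T -> \bar R}) (E : (T -> R) -> \bar R) (h : T -> R) :=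
  forall lam : R, 0 < lam -> forall del : R, 0 < del ->
  exists g : nat -> T -> R, (forall k, L2 mu (g k) /\ (E (g k) < del%:E)%E) /\
    loc_meas_conv mu g (fun x => lam * h x).

Section vanishing_energy.
Context {d : measure_display} {T : measurableType d} {R : realType}.
Context {mu : {measure set T -> \bar R}} {E : (T -> R) -> \bar R}.
Hypothesis HE : nonlinear_dirichlet_form mu E.
Local Notation L2 := (L2 mu).
Local Notation vanishing_energy := (vanishing_energy mu E).

Lemma kerLe_vanishing_energy {h} : kerLe mu E h -> vanishing_energy h.
Proof.
move=> [_ _ h0] lam lam0 del del0.
have c0 : 0 < Num.min (del / (4 * lam)) lam^-1.
  by rewrite lt_min divr_gt0 ?mulr_gt0 ?invr_gt0.
have /ereal_inf_lt[_ [l [l0 Eel] <-]] :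
    (normLe mu E h < (Num.min (del / (4 * lam)) lam^-1)%:E)%E by rewrite h0 lte_fin.
rewrite lte_fin lt_min ltr_pdivlMr ?mulr_gt0 // => /andP[ldel llam].
pose t := lam * l.
have t0 : 0 < t by rewrite mulr_gt0.
have t1 : t <= 1 by rewrite /t -(mulfV (lt0r_neq0 lam0)) ler_pM2l // ltW.
have tdel : 2 * t < del by rewrite /t; nra.
have /Ee_lt_approx[w [Lw wh]] : (Ee mu E (fun x => (l^-1 * h x)%R) < 2%:E)%E.
  by apply: le_lt_trans Eel _; rewrite lte_fin; lra.
exists (fun k x => t * w k x); split.
  move=> k; have [Lwk Ewk] := Lw k; split.
    apply: (L2_le _ Lwk) => [|x].
      exact: measurable_funM (measurable_cst _) (L2_measurable Lwk).
    by rewrite normrM ger0_norm ?ler_piMl // ltW.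
  apply: le_lt_trans (dform_scale HE t Lwk _) _; first by rewrite (ltW t0) t1.
  apply: le_lt_trans (lee_wpmul2l _ (ltW Ewk)) _; first by rewrite lee_fin ltW.
  by rewrite -EFinM lte_fin; lra.
have -> : (fun x => lam * h x) = (fun x => t * (l^-1 * h x)).
  by apply/funext => x; rewrite mulrA -(mulrA lam) mulfV ?gt_eqF // mulr1.
exact: loc_meas_convZ.
Qed.

Lemma vanishing_energyN {h} : vanishing_energy h -> vanishing_energy (fun x => - h x).
Proof.
move=> hE lam lam0 del del0; have [g [Lg gh]] := hE lam lam0 del del0.
exists (fun k x => - g k x); split.
  by move=> k; have [Lgk Egk] := Lg k; rewrite (dformN HE) //; split => //; exact: L2N.
have -> : (fun x => lam * - h x) = (fun x => - (lam * h x)).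
  by apply/funext => x; rewrite mulrN.
exact: loc_meas_convN.
Qed.

(* By [dform_clamp] the truncations of [u] at the approximants cost at most
   [E u + 2 del], and they converge in [L^2] by domination by [u]. *)
Lemma dform_clamp_le {u v : T -> R} : L2 u -> measurable_fun setT v -> (forall x, 0 <= v x) ->
  (forall del : R, 0 < del -> exists w : nat -> T -> R,
     [/\ forall k, L2 (w k), forall k x, 0 <= w k x, forall k, (E (w k) < del%:E)%E
       & loc_meas_conv mu w v]) ->
  (E (fun x => clamp (u x) (v x)) <= E u)%E.
Proof.
move=> Lu mv v0 vE; apply/lee_addgt0Pr => del del0.
have [w [Lw w0 Ew wv]] := vE (del / 2) (divr_gt0 del0 (ltr0Sn _ 1)).
have [mG IG] := sqr_dominator_integrable Lu.
apply: (dform_L2_conv_le HE (fun k => L2_clamp Lu (L2_measurable (Lw k)) (w0 k))).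
- exact: L2_clamp.
- apply: (L2_conv_loc_meas _ _ mG IG) => [k||k x|].
  + exact: measurable_clamp (L2_measurable Lu) (L2_measurable (Lw k)).
  + exact: measurable_clamp (L2_measurable Lu) mv.
  + exact: sqr_normB_le _ _ _ (clamp_abs _ _ (w0 k x)) (clamp_abs _ _ (v0 x)).
  + apply: (loc_meas_conv_le _ _ (fun k => L2_measurable (Lw k)) mv _ wv) => [k||k x].
    * exact: measurable_clamp (L2_measurable Lu) (L2_measurable (Lw k)).
    * exact: measurable_clamp (L2_measurable Lu) mv.
    * exact: clamp_lip _ _ _ (w0 k x) (v0 x).
- move=> k; apply: le_trans (dform_clamp HE Lu (Lw k)) _.
  rewrite -addeA leeD2l //.
  by apply: le_trans (leeD (ltW (Ew k)) (ltW (Ew k))) _; rewrite -EFinD lee_fin; lra.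
Qed.

(* [1_{h > alpha} u] is the pointwise limit of the truncations of [u] at the
   levels [n.+1 * (h - alpha)^+], which cost no energy by [dform_clamp_le]. *)
Lemma vanishing_energy_invariant {h alpha} : measurable_fun setT h -> vanishing_energy h ->
  0 <= alpha -> E_invariant mu E [set x | alpha < h x].
Proof.
move=> mh hE alpha0; set A := [set x | alpha < h x].
have mA : measurable A by exact: measurable_set_gt.
split => // u Lu.
pose v (n : nat) x := ramp (n.+1%:R * alpha) (n.+1%:R * h x).
have c0 n : 0 <= n.+1%:R * alpha by rewrite mulr_ge0.
have mhn n : measurable_fun setT (fun x => n.+1%:R * h x) by exact: measurable_funM.
have mv n : measurable_fun setT (v n) := measurable_contraction (ramp_lip _) (mhn n).
have Ev n : (E (fun x => clamp (u x) (v n x)) <= E u)%E.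
  apply: dform_clamp_le Lu (mv n) (fun x => ramp_ge0 _ _) _ => del del0.
  have [g [Lg gh]] := hE _ (ltr0Sn _ n) del del0.
  exists (fun k x => ramp (n.+1%:R * alpha) (g k x)); split.
  - by move=> k; exact: L2_contraction (ramp0 _ (c0 n)) (ramp_lip _) (Lg k).1.
  - by move=> k x; exact: ramp_ge0.
  - move=> k; apply: le_lt_trans _ (Lg k).2.
    exact (dform_contraction HE (ramp0 _ (c0 n)) (ramp_lip _) (Lg k).1).
  - apply: (loc_meas_conv_le _ (mv n) (fun k => L2_measurable (Lg k).1) (mhn n) _ gh).
      by move=> k; exact: measurable_contraction (ramp_lip _) (L2_measurable (Lg k).1).
    by move=> k x; exact: ramp_lip.
have mt : measurable_fun setT (fun x => \1_A x * u x).
  by apply: measurable_funM; [exact: measurable_indic | exact: L2_measurable Lu].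
have tu x : `|\1_A x * u x| <= `|u x|.
  by rewrite indicE; case: (_ \in _); rewrite ?mul1r ?mul0r ?normr0.
apply: (dform_L2_conv_le HE (fun n => L2_clamp Lu (mv n) (fun x => ramp_ge0 _ _))
  (L2_le mt Lu tu) _ Ev).
apply: (L2_conv_pointwise Lu _ mt _ tu _) => [n|n x|x].
- exact: measurable_clamp (L2_measurable Lu) (mv n).
- exact: clamp_abs (ramp_ge0 _ _).
- apply: cvg_near_cst; rewrite indicE; case: (boolP (x \in A)) => [/set_mem xA|xA].
    rewrite mul1r; apply: filterS (clamp_scale_eventually (u x) _ (ramp_gt0 _ _ xA)) => n.
    by rewrite /v rampZ.
  apply: nearW => n; rewrite mul0r /v rampZ // ramp_eq0 ?mulr0 ?clamp0 //.
  by rewrite leNgt; apply: contra xA => ?; exact/mem_set.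
Qed.

Lemma irreducible_level_sets {h} : irreducible mu E -> measurable_fun setT h ->
  vanishing_energy h -> forall r, mu [set x | r < h x] = 0%E \/ mu [set x | h x < r] = 0%E.
Proof.
move=> irr mh hE r; have [r0|r0] := leP 0 r.
  case: (irr _ (vanishing_energy_invariant mh hE r0)) => [|Nr]; first by left.
  right; apply: (subset_measure0 _ _ _ Nr) => [||x /= hxr]; first exact: measurable_set_lt.
    exact/measurableC/measurable_set_gt.
  by rewrite ltNge ltW.
have /(vanishing_energy_invariant (measurable_funN mh) (vanishing_energyN hE)) /irr[Nr|Nr] :
    0 <= - r by lra.
  by right; rewrite -Nr; congr (mu _); apply/seteqP; split => x /=; rewrite ltrN2.
left; apply: (subset_measure0 _ _ _ Nr) => [||x /= hxr]; first exact: measurable_set_gt.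
  exact/measurableC/measurable_set_gt/measurable_funN.
by rewrite ltNge lerN2 ltW.
Qed.

End vanishing_energy.

Section level_sets.
Context {d : measure_display} {T : measurableType d} {R : realType}.
Context {mu : {measure set T -> \bar R}}.

Lemma ae_of_null {N : set T} : measurable N -> mu N = 0%E -> \forall x \ae mu, ~ N x.
Proof. by move=> mN N0; exists N; split => // x /= /contrapT. Qed.

Lemma ae_False : (\forall x \ae mu, False) -> mu setT = 0%E.
Proof. by move=> [N [mN N0 sN]]; apply: (subset_measure0 _ mN _ N0) => // x _; exact: sN. Qed.

(* [c] is the infimum of the levels [r] with [h <= r] a.e. *)
Lemma ae_cst_of_level_sets (h : T -> R) : measurable_fun setT h ->
  (forall r, mu [set x | r < h x] = 0%E \/ mu [set x | h x < r] = 0%E) ->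
  exists c, {ae mu, forall x, h x = c}.
Proof.
move=> mh hr; have [T0|T0] := eqVneq (mu setT) 0%E.
  by exists 0; exact: measure0_ae.
pose S := [set r | mu [set x | r < h x] = 0%E].
have S_le r : S r -> \forall x \ae mu, h x <= r.
  by move=> Sr; apply: filterS (ae_of_null (measurable_set_gt r mh) Sr) => x /negP; rewrite -leNgt.
have notS_ge r : ~ S r -> \forall x \ae mu, r <= h x.
  move=> nSr; have {nSr}hr' : mu [set x | h x < r] = 0%E by case: (hr r).
  by apply: filterS (ae_of_null (measurable_set_lt r mh) hr') => x /negP; rewrite -leNgt.
have S_up r s : r <= s -> S r -> S s.
  move=> rs Sr; apply: (subset_measure0 _ (measurable_set_gt r mh) _ Sr) => //.
    exact: measurable_set_gt.
  by move=> x /= /(le_lt_trans rs).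
have [s Ss] : exists s, S s.
  apply: contrapT => nS; move/eqP: T0; apply; apply: ae_False.
  have /ae_foralln : forall n : nat, \forall x \ae mu, n%:R <= h x.
    by move=> n; apply: notS_ge => Sn; apply: nS; exists n%:R.
  apply: filterS => x hn; have := hn (Num.bound `|h x|).
  by have := archi_boundP (normr_ge0 (h x)); have := ler_norm (h x); lra.
have [b bS] : exists b, lbound S b.
  apply: contrapT => nb; move/eqP: T0; apply; apply: ae_False.
  have /ae_foralln : forall n : nat, \forall x \ae mu, h x <= - n%:R.
    move=> n; apply: S_le; apply: contrapT => nSn; apply: nb; exists (- n%:R) => r Sr.
    by rewrite leNgt; apply/negP => rn; apply: nSn; exact: S_up (ltW rn) Sr.
  apply: filterS => x hn; have := hn (Num.bound `|h x|).
  by have := archi_boundP (normr_ge0 (h x)); have := ler_norm (- h x); rewrite normrN; lra.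
pose c := inf S.
have above k : S (c + k.+1%:R^-1).
  have [|r Sr rc] := @inf_lt _ S (c + k.+1%:R^-1) (ex_intro _ s Ss).
    by rewrite ltrDl invr_gt0 ltr0Sn.
  exact: S_up (ltW rc) Sr.
have below k : ~ S (c - k.+1%:R^-1).
  move=> Sk; have := ge_inf (ex_intro _ b bS) Sk.
  by rewrite -/c lerBrDr gerDl leNgt invr_gt0 ltr0Sn.
have near_c k : \forall x \ae mu, h x <= c + k.+1%:R^-1 /\ c - k.+1%:R^-1 <= h x.
  by apply: filterS2 (S_le _ (above k)) (notS_ge _ (below k)) => x; split.
exists c; apply: filterS (ae_foralln near_c) => x hk.
apply/eqP; rewrite eq_le; apply/andP; split; rewrite leNgt; apply/negP => /ltr_add_invr[k hxk];
  have [hk1 hk2] := hk k; set e := k.+1%:R^-1 in hxk hk1 hk2; lra.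
Qed.

End level_sets.

Theorem theorem3p16 (d : measure_display) (T : measurableType d) (R : realType)
  (mu : {measure set T -> \bar R}) (E : (T -> R) -> \bar R) :
  sigma_finite setT mu ->
  nonlinear_dirichlet_form mu E ->
  (forall (h : T -> R) (alpha : R), kerLe mu E h -> 0 <= alpha ->
     E_invariant mu E [set x | alpha < h x])
  /\
  (irreducible mu E ->
     forall h : T -> R, kerLe mu E h -> exists c : R, {ae mu, forall x, h x = c}).
Proof.
move=> _ HE; split=> [h alpha hk|irr h hk];
  have [mh _ _] := hk; have hE := kerLe_vanishing_energy HE hk.
  exact: vanishing_energy_invariant.
exact: ae_cst_of_level_sets mh (irreducible_level_sets HE irr mh hE).
Qed.
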